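(* Let $S_1:=\{(A,B): A\le_{FG}B\}$ be the set of pairs of problems such that $A$ is fine-grained reducible to $B$, and let $S_2:=\{(A,B): A\le_{PFG}B\}$ be the set of pairs of problems such that (some parameterization of) $A$ is parameterized fine-grained reducible to (some parameterization of) $B$. Then $S_1=S_2$.
   Context: Each problem $P$ comes with a function $p(n)$, its conjectured best running time. A parameterized language $\langle L,k_1,\dots,k_\ell\rangle$ consists of a language $L\subseteq\Sigma^*$ together with computable parameterization functions $k_i:\Sigma^*\to\mathbb{N}$. Fine-grained reduction: for nondecreasing $a(n),b(n)$ (the conjectured best running times of $A$ and $B$), $A\le_{FG}B$ if for every $\varepsilon>0$ there exist $\delta>0$ and an algorithm $F$ solving $A$ with oracle access to $B$ such that $F$ runs in at most $d\cdot a^{1-\delta}(n)$ time (for a constant $d$), making at most $k(n)$ oracle queries adaptively (the $j$-th query instance may depend on earlier queries and answers), and the query sizes $n_i$, for any choice of oracle answers, satisfy $\sum_{i=1}^{k(n)} b^{1-\varepsilon}(n_i)\le d\cdot a^{1-\delta}(n)$. Parameterized fine-grained reduction (PFGR): $\langle A,k_1,\dots,k_{i_A}\rangle\le_{PFG}\langle B,\lambda_1,\dots,\lambda_{i_B}\rangle$ if there is an algorithm $R$ such that (1) for every $\varepsilon>0$ there is $\delta>0$ such that $R$ runs in $a^{1-\delta}(n)$ time on inputs $I_A$ of length $n$, making $q$ queries to $\langle B\rangle$ of lengths $n_1,\dots,n_q$ with $\sum_{i=1}^q b^{1-\varepsilon}(n_i)\le c\cdot a^{1-\delta}(n)$ for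 some constant $c>0$, and $R$ accepts iff $I_A\in\langle A\rangle$; and (2) for every query $q_j$, $j=1,\dots,q$, there is a computable function $g_j=(g_{j,1},\dots,g_{j,i_B}):\mathbb{N}^{i_A}\to\mathbb{N}^{i_B}$ such that for each $i$, the parameter $\lambda_i$ of the $j$-th query instance satisfies $\lambda_i\le g_{j,i}(k_1,\dots,k_{i_A})$ (with $k_1,\dots,k_{i_A}$ the parameter values of $I_A$). *)

From mathcomp Require Import all_boot.
From Stdlib Require Import Reals.

Set Implicit Arguments.
Unset Strict Implicit.
Unset Printing Implicit Defensive.

(* Tape 1 = input/work tape, tape 2 = oracle (query) tape.             *)
(* Tapes are one-way infinite; blank = None.                           *)

Inductive move := MLeft | MStay | MRight.

Record OTM (Sigma : finType) := {
  st : finType;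
  wk : finType;                    (* extra (non-input) tape symbols *)
  q_start : st; q_accept : st; q_reject : st;
  q_query : st; q_yes : st; q_no : st;
  delta : st -> option (Sigma + wk) -> option (Sigma + wk) ->
          st * option (Sigma + wk) * option (Sigma + wk) * move * move
}.

Section Semantics.
Variable Sigma : finType.
Variable M : OTM Sigma.

Definition sym := option (Sigma + wk M).

(* left part stored reversed; head reads the first cell of [tright] *)
Record tape := Tape { tleft : seq sym; tright : seq sym }.

Definition tread (t : tape) : sym := head None (tright t).
Definition twrite (t : tape) (s : sym) : tape :=
  Tape (tleft t) (s :: behead (tright t)).
Definition tmove (t : tape) (m : move) : tape :=
  match m with
  | MStay => t
  | MRight => Tape (tread t :: tleft t) (behead (tright t))
  | MLeft => match tleft t with
             | [::] => t
             | a :: l => Tape l (a :: tright t)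
             end
  end.
Definition tcontents (t : tape) : seq sym := rev (tleft t) ++ tright t.
Definition tempty : tape := Tape [::] [::].

(* the string written on the oracle tape: maximal prefix of input symbols *)
Fixpoint qstr (l : seq sym) : seq Sigma :=
  match l with
  | Some (inl a) :: l' => a :: qstr l'
  | _ => [::]
  end.

(* output of a (function-computing) machine: length of maximal nonblank
   prefix of tape 1 *)
Fixpoint nonblank_prefix (l : seq sym) : nat :=
  match l with
  | Some _ :: l' => (nonblank_prefix l').+1
  | _ => 0
  end.

Record config := Config {
  cstate : st M; ctape1 : tape; ctape2 : tape; cnq : nat
}.

Definition halted (c : config) : bool :=
  (cstate c == q_accept M) || (cstate c == q_reject M).

Definition is_query_step (c : config) : bool :=
  ~~ halted c && (cstate c == q_query M).

(* [f j q] is the answer given to the j-th query (0-based), whose string is q *)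
Definition step (f : nat -> seq Sigma -> bool) (c : config) : config :=
  if halted c then c
  else if cstate c == q_query M then
    let q := qstr (tcontents (ctape2 c)) in
    Config (if f (cnq c) q then q_yes M else q_no M) (ctape1 c) tempty (cnq c).+1
  else
    let '(s', w1, w2, m1, m2) := delta (cstate c) (tread (ctape1 c)) (tread (ctape2 c)) in
    Config s' (tmove (twrite (ctape1 c) w1) m1) (tmove (twrite (ctape2 c) w2) m2) (cnq c).

Definition init_tape (l : seq sym) : tape := Tape [::] l.

Definition init_config (l : seq sym) : config :=
  Config (q_start M) (init_tape l) tempty 0.

Definition input_syms (x : seq Sigma) : seq sym := map (fun a => Some (inl a)) x.

Definition cfg (f : nat -> seq Sigma -> bool) (l : seq sym) (t : nat) : config :=
  iter t (step f) (init_config l).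

Fixpoint queries (f : nat -> seq Sigma -> bool) (l : seq sym) (t : nat) : seq (seq Sigma) :=
  match t with
  | 0 => [::]
  | t'.+1 => queries f l t' ++
             (if is_query_step (cfg f l t')
              then [:: qstr (tcontents (ctape2 (cfg f l t')))] else [::])
  end.

End Semantics.

Arguments cfg {Sigma} M f l t.
Arguments queries {Sigma} M f l t.
Arguments input_syms {Sigma} M x.
Arguments init_config {Sigma} M l.
Arguments halted {Sigma M} c.

(* oracle-free runs: every oracle query answered "no" *)
Definition no_oracle {Sigma : finType} : nat -> seq Sigma -> bool := fun _ _ => false.

Definition computes_on {Sigma : finType} (M : OTM Sigma) (l : seq (sym M)) (v : nat) : Prop :=
  exists t, halted (cfg M no_oracle l t) /\
            nonblank_prefix (tcontents (ctape1 (cfg M no_oracle l t))) = v.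

Arguments computes_on {Sigma} M l v.

Definition computable_str {Sigma : finType} (h : seq Sigma -> nat) : Prop :=
  exists M : OTM Sigma, forall x, computes_on M (input_syms M x) (h x).

(* encoding of a tuple of naturals over {0,1}: n_1 ... n_k as 1^{n_1}0 ... 1^{n_k}0 *)
Definition enc_tuple (v : seq nat) : seq bool :=
  flatten (map (fun n => nseq n true ++ [:: false]) v).

Definition computable_tuple (k : nat) (g : seq nat -> nat) : Prop :=
  exists M : OTM bool, forall v : seq nat, size v = k ->
    computes_on M (input_syms M (enc_tuple v)) (g v).

(* real power with the convention x^y := 0 for x <= 0 *)
Definition pw (x y : R) : R := if Rle_dec x 0 then 0%R else Rpower x y.

(* a problem: a language over Sigma with its conjectured best running time,
   a nondecreasing function *)
Record Problem (Sigma : finType) := {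
  lang : seq Sigma -> bool;
  rtime : nat -> R;
  rtime_mono : forall m n : nat, (m <= n)%N -> (rtime m <= rtime n)%R
}.

Definition oracle_of {Sigma : finType} (B : Problem Sigma) : nat -> seq Sigma -> bool :=
  fun _ q => lang B q.

Definition sumR (l : seq R) : R := foldr Rplus 0%R l.

Definition fg_conditions {Sigma : finType} (A B : Problem Sigma)
    (eps delta d : R) (M : OTM Sigma) : Prop :=
  (forall x : seq Sigma, exists t : nat,
      (INR t <= d * pw (rtime A (size x)) (1 - delta))%R /\
      halted (cfg M (oracle_of B) (input_syms M x) t) /\
      ((cstate (cfg M (oracle_of B) (input_syms M x) t) == q_accept M) = lang A x)) /\
  (* for any choice of oracle answers, the query sizes satisfy the sum bound *)
  (forall (f : nat -> seq Sigma -> bool) (x : seq Sigma) (t : nat),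
      (sumR (map (fun q => pw (rtime B (size q)) (1 - eps))
                 (queries M f (input_syms M x) t))
       <= d * pw (rtime A (size x)) (1 - delta))%R).

Definition FG_reducible {Sigma : finType} (A B : Problem Sigma) : Prop :=
  forall eps : R, (0 < eps)%R ->
    exists delta : R, (0 < delta)%R /\
    exists d : R, (0 < d)%R /\
    exists M : OTM Sigma, fg_conditions A B eps delta d M.

Definition parameterization (Sigma : finType) := seq (seq Sigma -> nat).

Definition is_parameterization {Sigma : finType} (ks : parameterization Sigma) : Prop :=
  forall k, List.In k ks -> computable_str k.

Definition param_values {Sigma : finType} (ks : parameterization Sigma) (x : seq Sigma) : seq nat :=
  map (fun k => k x) ks.

Definition PFG_reducible {Sigma : finType}
    (A : Problem Sigma) (kA : parameterization Sigma)
    (B : Problem Sigma) (kB : parameterization Sigma) : Prop :=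
  forall eps : R, (0 < eps)%R ->
    exists delta : R, (0 < delta)%R /\
    exists c : R, (0 < c)%R /\
    exists M : OTM Sigma,
      fg_conditions A B eps delta c M /\
      (* for each query index j, computable g_j : N^{i_A} -> N^{i_B} bounding the
         parameters of the j-th query instance in terms of those of the input *)
      exists g : nat -> nat -> seq nat -> nat,
        (forall j i, computable_tuple (size kA) (g j i)) /\
        (forall (x : seq Sigma) (t j i : nat) (q : seq Sigma) (lam : seq Sigma -> nat),
           List.nth_error (queries M (oracle_of B) (input_syms M x) t) j = Some q ->
           List.nth_error kB i = Some lam ->
           (lam q <= g j i (param_values kA x))%N).

Definition S1 (Sigma : finType) : Problem Sigma * Problem Sigma -> Prop :=
  fun p => FG_reducible p.1 p.2.

Definition S2 (Sigma : finType) : Problem Sigma * Problem Sigma -> Prop :=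
  fun p => exists (kA kB : parameterization Sigma),
    is_parameterization kA /\ is_parameterization kB /\
    PFG_reducible p.1 kA p.2 kB.

Arguments S1 : clear implicits.
Arguments S2 : clear implicits.

From mathcomp Require Import all_boot.
From Stdlib Require Import Reals.
From Stdlib Require Import FunctionalExtensionality PropExtensionality.

(* A parameterized fine-grained reduction is a fine-grained reduction plus a
   bound on the parameters of the queries, so S2 is contained in S1.
   Conversely, every fine-grained reduction is a parameterized one for the
   constant-zero parameterizations of A and B: all query parameters are 0,
   bounded by the computable function 0. *)

Section ConstantZero.

Variable Sigma : finType.

(* States: [None] is the start state, [Some true] both halting states and
   [Some false] the (never reached) query and answer states. *)
Definition eraser : OTM Sigma :=
  @Build_OTM Sigma (option bool) unit
    None (Some true) (Some true) (Some false) (Some false) (Some false)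
    (fun _ _ _ => (Some true, None, None, MStay, MStay)).

Lemma eraser_computes_zero (l : seq (sym eraser)) : computes_on eraser l 0.
Proof. by exists 1. Qed.

Lemma computable_str_zero : computable_str (fun _ : seq Sigma => 0).
Proof. by exists eraser => x; apply: eraser_computes_zero. Qed.

Definition zero_parameterization : parameterization Sigma := [:: fun _ => 0].

Lemma is_parameterization_zero : is_parameterization zero_parameterization.
Proof. by move=> k [<- | []]; apply: computable_str_zero. Qed.

End ConstantZero.

Lemma computable_tuple_zero (k : nat) : computable_tuple k (fun _ => 0).
Proof. by exists (eraser bool) => v _; apply: eraser_computes_zero. Qed.

Lemma FG_reducible_PFG_zero (Sigma : finType) (A B : Problem Sigma) :
  FG_reducible A B ->
  PFG_reducible A (zero_parameterization Sigma) B (zero_parameterization Sigma).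
Proof.
move=> redAB eps eps_gt0.
have [delta [delta_gt0 [d [d_gt0 [M condM]]]]] := redAB eps eps_gt0.
exists delta; split=> //; exists d; split=> //; exists M; split=> //.
exists (fun _ _ _ => 0); split=> [j i | x t j [|i] q lam _ /=].
- exact: computable_tuple_zero.
- by case=> <-.
- by case: i.
Qed.

Lemma PFG_reducible_FG (Sigma : finType) (A B : Problem Sigma)
    (kA kB : parameterization Sigma) :
  PFG_reducible A kA B kB -> FG_reducible A B.
Proof.
move=> redAB eps eps_gt0.
have [delta [delta_gt0 [d [d_gt0 [M [condM _]]]]]] := redAB eps eps_gt0.
by exists delta; split=> //; exists d; split=> //; exists M.
Qed.

Theorem mainTheorem1 (Sigma : finType) : S1 Sigma = S2 Sigma.
Proof.
apply: functional_extensionality => -[A B].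
apply: propositional_extensionality; split.
- move=> redAB; exists (zero_parameterization Sigma), (zero_parameterization Sigma).
  split; first exact: is_parameterization_zero.
  split; first exact: is_parameterization_zero.
  exact: FG_reducible_PFG_zero.
- by move=> [kA [kB [_ [_ redAB]]]]; apply: PFG_reducible_FG redAB.
Qed.
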